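(* No vector $(x_\alpha,\dots,x_1)$ with $\alpha\ge2$ and $x_{\alpha-1}=1$ is realizable.
   Context: All graphs are finite, nonempty, and reflexive (every vertex has a loop). $N[v]$ is the closed neighborhood of $v$ (including $v$). For distinct $v,w$, $w$ strictly corners $v$ if $N[v]\subsetneq N[w]$; $v$ is then a strict corner. Corner ranking: set $G^{(1)}=G$, $k=1$. If $G^{(k)}$ is a clique, give all its vertices rank $k$ and stop. Else if $G^{(k)}$ has no strict corners, give all its vertices rank $\infty$ and stop. Else give every strict corner of $G^{(k)}$ rank $k$, delete them to get $G^{(k+1)}$ (induced subgraph), increase $k$ and repeat. The corner rank is the largest rank of a vertex; $X_k$ is the set of rank-$k$ vertices; cop-win graphs are exactly those of finite corner rank. A vector is a finite list of positive integers; the rank cardinality vector of a graph of corner rank $\alpha$ is $(x_\alpha,\dots,x_1)$ with $x_k=|X_k|$; a vector is realizable if it is the rank cardinality vector of some cop-win graph. *)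

From mathcomp Require Import all_boot.
Set Implicit Arguments. Unset Strict Implicit. Unset Printing Implicit Defensive.

(* Subgraphs are induced subgraphs on a
   vertex set [S : {set T}]. *)

Section CornerRanking.
Variables (T : finType) (adj : rel T).

Definition nbhd (S : {set T}) (v : T) : {set T} := [set u in S | adj v u].

Definition is_clique (S : {set T}) : bool :=
  [forall u in S, forall v in S, adj u v].

Definition strict_corners (S : {set T}) : {set T} :=
  [set v in S | [exists w in S, (w != v) && (nbhd S v \proper nbhd S w)]].

(* G_stage k = G^{(k+1)} (0-indexed stages) *)
Definition G_stage (k : nat) : {set T} :=
  iter k (fun S => S :\: strict_corners S) [set: T].

Definition corner_rank_is (alpha : nat) : Prop :=
  0 < alpha /\ is_clique (G_stage alpha.-1) /\
  forall j, j < alpha.-1 ->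
    ~~ is_clique (G_stage j) /\ strict_corners (G_stage j) != set0.

Definition rank_card (alpha k : nat) : nat :=
  if k == alpha then #|G_stage k.-1| else #|strict_corners (G_stage k.-1)|.

Definition rank_card_vector (alpha : nat) : seq nat :=
  [seq rank_card alpha (alpha - i) | i <- iota 0 alpha].

End CornerRanking.

Definition reflexive_graph (T : finType) (adj : rel T) : Prop :=
  0 < #|T| /\ (forall v, adj v v) /\ (forall u v, adj u v = adj v u).

Definition is_vector (x : seq nat) : Prop := all (fun n => 0 < n) x.

Definition realizable (x : seq nat) : Prop :=
  exists (T : finType) (adj : rel T), reflexive_graph adj /\
    exists alpha, corner_rank_is adj alpha /\ rank_card_vector adj alpha = x.

From mathcomp Require Import all_boot.
Set Implicit Arguments. Unset Strict Implicit. Unset Printing Implicit Defensive.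

(* Suppose the stage [S] before the final clique is not a clique but has a
   single strict corner [c], so that [S :\ c] is a clique.  Some [u] of [S]
   then misses [c], and [N[u] = S :\ c].  A vertex [w] cornering [c] is
   adjacent to [c] and to all of [S :\ c], so [w] strictly corners [u] as
   well: a second strict corner. *)

Section OneCornerBeforeClique.
Variables (T : finType) (adj : rel T).
Hypotheses (adj_refl : forall v, adj v v) (adj_sym : forall u v, adj u v = adj v u).

Lemma mem_nbhd (S : {set T}) (v u : T) : (u \in nbhd adj S v) = (u \in S) && adj v u.
Proof. by rewrite inE. Qed.

Lemma strict_cornerP (S : {set T}) (c : T) : c \in S ->
  reflect (exists2 w, [/\ w \in S & w != c] & nbhd adj S c \proper nbhd adj S w)
          (c \in strict_corners adj S).
Proof.
move=> cS; rewrite inE cS; apply: (iffP existsP) => [[w /and3P[wS wc cw]]|[w [wS wc] cw]].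
  by exists w.
by exists w; rewrite wS wc.
Qed.

Lemma strict_corner_adj (S : {set T}) (c w : T) :
  c \in S -> nbhd adj S c \proper nbhd adj S w -> adj w c.
Proof.
move=> cS /properP[/subsetP/(_ c)]; rewrite !mem_nbhd cS adj_refl.
by move=> /(_ isT) /andP[].
Qed.

Lemma clique_setD1_nonadj (S : {set T}) (c : T) :
  is_clique adj (S :\ c) -> ~~ is_clique adj S ->
  exists u, [/\ u \in S, u != c & ~~ adj c u].
Proof.
move=> /forall_inP cl /forall_inPn[a aS /forall_inPn[b bS]].
have [-> nab | ac] := eqVneq a c.
  by exists b; split=> //; apply: contraNneq nab => ->; rewrite adj_refl.
have [-> nab | bc nab] := eqVneq b c; first by exists a; rewrite adj_sym.
have aD : a \in S :\ c by rewrite !inE ac aS.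
have bD : b \in S :\ c by rewrite !inE bc bS.
by move/forall_inP: (cl a aD) => /(_ b bD); rewrite (negbTE nab).
Qed.

Lemma nonadj_strict_corner (S : {set T}) (c u w : T) :
  is_clique adj (S :\ c) -> c \in S -> u \in S -> u != c -> ~~ adj c u ->
  w \in S -> w != c -> adj w c -> u \in strict_corners adj S.
Proof.
move=> /forall_inP cl cS uS uc ncu wS wc wadjc.
have adjD1 y z : y \in S -> z \in S -> y != c -> z != c -> adj y z.
  move=> yS zS yc zc; have yD : y \in S :\ c by rewrite !inE yc yS.
  by apply: (forall_inP (cl y yD)); rewrite !inE zc zS.
apply/strict_cornerP => //; exists w.
  by split=> //; apply: contraNneq ncu => <-; rewrite adj_sym.
apply/properP; split; last by exists c; rewrite !mem_nbhd cS // adj_sym.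
apply/subsetP=> y; rewrite !mem_nbhd => /andP[yS uy]; rewrite yS.
have [yc | yc] := eqVneq y c; last by rewrite adjD1.
by move: uy; rewrite yc adj_sym (negbTE ncu).
Qed.

Lemma strict_corners_before_clique_neq1 (S : {set T}) :
  ~~ is_clique adj S -> is_clique adj (S :\: strict_corners adj S) ->
  #|strict_corners adj S| != 1.
Proof.
move=> ncl; apply: contraTneq => /eqP/cards1P[c Sc]; rewrite Sc.
have cS : c \in S by move: (set11 c); rewrite -Sc inE => /andP[].
have /strict_cornerP[//|w [wS wc] cw] : c \in strict_corners adj S by rewrite Sc set11.
apply/negP=> cl; have [u [uS uc ncu]] := clique_setD1_nonadj cl ncl.
have := nonadj_strict_corner cl cS uS uc ncu wS wc (strict_corner_adj cS cw).
by rewrite Sc inE (negbTE uc).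
Qed.

End OneCornerBeforeClique.

Lemma G_stageS (T : finType) (adj : rel T) (k : nat) :
  G_stage adj k.+1 = G_stage adj k :\: strict_corners adj (G_stage adj k).
Proof. by rewrite /G_stage iterS. Qed.

(* x = (x_alpha, ..., x_1) is a list; size x = alpha; nth 0 x 1 = x_{alpha-1}. *)
Theorem corollary3p19 (x : seq nat) :
  is_vector x -> 2 <= size x -> nth 0 x 1 = 1 -> ~ realizable x.
Proof.
move=> _ size_x x1 [T [adj [[_ [adj_refl adj_sym]] [alpha [[_ [cl earlier]] xE]]]]].
move: size_x x1; rewrite -{}xE.
rewrite size_map size_iota; case: alpha cl earlier => [|[|n]] // cl earlier _.
rewrite (nth_map 0) ?size_iota // nth_iota // /rank_card subn1 /=.
rewrite (ltn_eqF (ltnSn n.+1)); apply/eqP.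
have [ncl _] := earlier n (ltnSn n).
by apply: strict_corners_before_clique_neq1 => //; rewrite -G_stageS.
Qed.
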